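(* Let $M$ be a measure-many quantum finite automaton that uses both a left and a right end-marker. Then there exists a measure-many quantum finite automaton $M'$ that uses only a right end-marker and is equivalent to $M$, i.e. for every $x\in\Sigma^*$ the probability that $M$ accepts $x$ equals the probability that $M'$ accepts $x$.
   Context: A measure-many QFA (MM-QFA) over $\Sigma$ with one (right) end-marker is a tuple $(Q,\Sigma,\{U_\sigma\}_{\sigma\in\Sigma\cup\{\$\}},q_0,Q_{acc},Q_{rej})$ with $Q$ finite indexing an orthonormal basis of $\mathbb{C}^Q$, end-marker $\$\notin\Sigma$, unitary $U_\sigma$, initial state $q_0$, and $Q$ partitioned into $Q_{acc},Q_{rej},Q_{non}$ with orthogonal projections $P_{acc},P_{rej},P_{non}$. On input $x$ it processes the symbols of $x\$$ maintaining $(\psi,p_{acc},p_{rej})$, initially $(|q_0\rangle,0,0)$; on reading $\sigma$: $\psi'=U_\sigma\psi$, $p_{acc}\mathrel{+}=\|P_{acc}\psi'\|^2$, $p_{rej}\mathrel{+}=\|P_{rej}\psi'\|^2$, $\psi\leftarrow P_{non}\psi'$; the acceptance probability is the final $p_{acc}$. An MM-QFA with both end-markers additionally has a unitary $U_{¢}$ for a left end-marker ${¢}\notin\Sigma\cup\{\$\}$ and processes ${¢}x\$$ in the same way (including the measurement after reading ${¢}$). *)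

From HB Require Import structures.
From mathcomp Require Import all_boot all_order all_algebra.
From mathcomp Require Import reals.
From mathcomp.real_closed Require Import complex.
Set Implicit Arguments. Unset Strict Implicit. Unset Printing Implicit Defensive.
Import Order.TTheory GRing.Theory Num.Theory.
Local Open Scope ring_scope.
Local Open Scope complex_scope.

Section QFA.
Variable R : realType.
Notation C := (R[i]).

Definition adjmx n (A : 'M[C]_n) : 'M[C]_n := \matrix_(i, j) (A j i)^*.
Definition unitary n (A : 'M[C]_n) : Prop := A *m adjmx A = 1%:M.

(* Basis states 'I_n; the sets Qacc, Qrej are disjoint and Qnon is the rest. *)

(* one measure-and-apply step: (psi, p_acc, p_rej) *)
Definition mm_step n (Qacc Qrej : {set 'I_n}) (U : 'M[C]_n)
    (st : 'cV[C]_n * C * C) : 'cV[C]_n * C * C :=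
  let psi' := U *m st.1.1 in
  (\col_i (if (i \notin Qacc) && (i \notin Qrej) then psi' i 0 else 0),
   st.1.2 + \sum_(i in Qacc) `|psi' i 0| ^+ 2,
   st.2 + \sum_(i in Qrej) `|psi' i 0| ^+ 2).

Definition init_state n (q0 : 'I_n) : 'cV[C]_n * C * C :=
  (delta_mx q0 0, 0, 0).

(* MM-QFA with only a right end-marker; the unitary for '$' is U None. *)
Record mmqfa1 (Sigma : finType) (n : nat) := MMQFA1 {
  U1 : option Sigma -> 'M[C]_n;
  q01 : 'I_n;
  acc1 : {set 'I_n};
  rej1 : {set 'I_n};
  disj1 : [disjoint acc1 & rej1];
  unit1 : forall s, unitary (U1 s)
}.

(* MM-QFA with both end-markers: U2 None = '$', Ucent = left end-marker. *)
Record mmqfa2 (Sigma : finType) (n : nat) := MMQFA2 {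
  U2 : option Sigma -> 'M[C]_n;
  Ucent : 'M[C]_n;
  q02 : 'I_n;
  acc2 : {set 'I_n};
  rej2 : {set 'I_n};
  disj2 : [disjoint acc2 & rej2];
  unit2 : forall s, unitary (U2 s);
  unitcent : unitary Ucent
}.

Definition accprob1 Sigma n (M : mmqfa1 Sigma n) (x : seq Sigma) : C :=
  (foldl (fun st s => mm_step (acc1 M) (rej1 M) (U1 M s) st)
         (init_state (q01 M)) (rcons (map Some x) None)).1.2.

(* acceptance probability on input x: process ¢x$ (measuring after ¢) *)
Definition accprob2 Sigma n (M : mmqfa2 Sigma n) (x : seq Sigma) : C :=
  (foldl (fun st s => mm_step (acc2 M) (rej2 M) (U2 M s) st)
         (mm_step (acc2 M) (rej2 M) (Ucent M) (init_state (q02 M)))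
         (rcons (map Some x) None)).1.2.

End QFA.

(* After reading the left end-marker, M is in a subnormalised state psi1 and has
   already collected the probabilities pacc and prej, with
   |psi1|^2 + pacc + prej = 1.  Add five ancilla basis states and let
   psi = psi1 (+) (sqrt pacc, sqrt prej on two non-halting ancilla states), a unit
   vector orthogonal to the ancilla start state e.  The Householder reflection W
   exchanging e and psi is an involution that fixes every halting basis state, so
   it commutes with the measurements.  Hence the one-marker automaton with letter
   unitaries W (U_sigma (+) P) W, started in e = W psi, runs as the image under W
   of the block automaton started in psi.  There the permutation P sends the two
   ancilla amplitudes to an accepting and a rejecting state at the first letter,
   paying out pacc and prej, while the first block continues M from psi1. *)

From mathcomp Require Import all_boot all_order all_algebra.
From mathcomp Require Import reals.
From mathcomp.real_closed Require Import complex.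
From mathcomp Require Import fingroup perm sesquilinear spectral ring.
Set Implicit Arguments. Unset Strict Implicit. Unset Printing Implicit Defensive.
Import Order.TTheory GRing.Theory Num.Theory.
Local Open Scope ring_scope.
Local Open Scope sesquilinear_scope.

Section ConjugateTranspose.
Variable C : numClosedFieldType.

Lemma trmxC_mul m n p (A : 'M[C]_(m, n)) (B : 'M[C]_(n, p)) :
  (A *m B) ^t* = B ^t* *m A ^t*.
Proof. by rewrite trmx_mul map_mxM. Qed.

Lemma trmxCB m n (A B : 'M[C]_(m, n)) : (A - B) ^t* = A ^t* - B ^t*.
Proof. by rewrite linearB map_mxB. Qed.

Definition sqnorm n (z : 'cV[C]_n) : C := \sum_i `|z i 0| ^+ 2.

Lemma sqnormE n (z : 'cV[C]_n) : z ^t* *m z = (sqnorm z)%:M.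
Proof.
apply/matrixP => i j; rewrite !ord1 !mxE /=.
by apply: eq_bigr => k _; rewrite !mxE normCK mulrC.
Qed.

Lemma sqnorm_unitary n (U : 'M[C]_n) (z : 'cV[C]_n) :
  U \is unitarymx -> sqnorm (U *m z) = sqnorm z.
Proof.
move=> /unitarymxP /mulmx1C UtU.
have := sqnormE (U *m z); rewrite trmxC_mul mulmxA -(mulmxA _ _ U) UtU mulmx1.
by rewrite sqnormE => /matrixP/(_ 0 0); rewrite !mxE /= !mulr1n.
Qed.

Lemma sqnorm_col_mx n1 n2 (y : 'cV[C]_n1) (w : 'cV[C]_n2) :
  sqnorm (col_mx y w) = sqnorm y + sqnorm w.
Proof.
rewrite /sqnorm big_split_ord.
by congr (_ + _); apply: eq_bigr => i _; rewrite ?col_mxEu ?col_mxEd.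
Qed.

Lemma sqnorm_delta n (i : 'I_n) : sqnorm (delta_mx i 0 : 'cV[C]_n) = 1.
Proof.
rewrite /sqnorm (bigD1 i) //= big1 => [|j /negbTE ji]; rewrite mxE.
  by rewrite !eqxx normr1 expr1n addr0.
by rewrite ji normr0 expr0n.
Qed.

Lemma block_unitarymx n1 n2 (U1 : 'M[C]_n1) (U2 : 'M[C]_n2) :
  U1 \is unitarymx -> U2 \is unitarymx -> block_mx U1 0 0 U2 \is unitarymx.
Proof.
move=> /unitarymxP U1u /unitarymxP U2u; apply/unitarymxP.
rewrite tr_block_mx map_block_mx !trmx0 !map_mx0 mulmx_block.
by rewrite !mulmx0 !mul0mx !addr0 !add0r U1u U2u -scalar_mx_block.
Qed.

Definition householder n (u : 'cV[C]_n) : 'M[C]_n := 1%:M - u *m u ^t*.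

Lemma householder_adj n (u : 'cV[C]_n) : (householder u) ^t* = householder u.
Proof. by rewrite trmxCB trmxC_mul trmxCK trmx1 map_mx1. Qed.

Lemma householderK n (u : 'cV[C]_n) :
  u ^t* *m u = 2%:M -> householder u *m householder u = 1%:M.
Proof.
move=> uu; rewrite /householder mulmxBl mul1mx mulmxBr mulmx1 !mulmxA.
rewrite -(mulmxA u) uu mul_mx_scalar -scalemxAl scaler_nat mulr2n.
by rewrite opprD opprK addrA -(addrA 1%:M) -opprD subrK.
Qed.

Lemma householder_unitary n (u : 'cV[C]_n) :
  u ^t* *m u = 2%:M -> householder u \is unitarymx.
Proof. by move=> uu; apply/unitarymxP; rewrite householder_adj householderK. Qed.

Lemma householder_comm n (P : 'M[C]_n) (u : 'cV[C]_n) :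
  P ^t* = P -> P *m u = u -> householder u *m P = P *m householder u.
Proof.
move=> Pherm Pu; rewrite /householder mulmxBl mulmxBr mul1mx mulmx1 mulmxA Pu.
by rewrite -mulmxA -[in u ^t* *m P]Pherm -trmxC_mul Pu.
Qed.

Lemma householder_fix n p (u : 'cV[C]_n) (z : 'M[C]_(n, p)) i j :
  u i 0 = 0 -> (householder u *m z) i j = z i j.
Proof.
by move=> ui0; rewrite mulmxBl mul1mx -mulmxA !mxE big_ord1 ui0 mul0r subr0.
Qed.

Section OrthonormalPair.
Variables (n : nat) (e v : 'cV[C]_n).
Hypotheses (e_unit : e ^t* *m e = 1%:M) (v_unit : v ^t* *m v = 1%:M)
  (e_ortho_v : e ^t* *m v = 0).

Lemma v_ortho_e : v ^t* *m e = 0.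
Proof.
rewrite -[e]trmxCK -trmxC_mul e_ortho_v.
by apply/matrixP => i j; rewrite !mxE conjC0.
Qed.

Lemma orthonormal_sub_sqnorm : (e - v) ^t* *m (e - v) = 2%:M.
Proof.
rewrite trmxCB mulmxBl !mulmxBr e_unit v_unit e_ortho_v v_ortho_e.
by rewrite !subr0 sub0r opprK -raddfD.
Qed.

Lemma householder_swap : householder (e - v) *m e = v.
Proof.
rewrite mulmxBl mul1mx -mulmxA trmxCB [(_ - v ^t*) *m e]mulmxBl e_unit v_ortho_e.
rewrite subr0 mulmx1.
by rewrite opprB addrC subrK.
Qed.

End OrthonormalPair.
End ConjugateTranspose.

Section MMStep.
Variable R : realType.
Local Notation C := R[i].
Local Notation state n := ('cV[C]_n * C * C)%type.

Lemma unitaryP n (A : 'M[C]_n) : unitary A <-> A \is unitarymx.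
Proof.
rewrite /unitary (_ : adjmx A = A ^t*); first by split=> /unitarymxP.
by apply/matrixP => i j; rewrite !mxE.
Qed.

Section Measurement.
Variables (n : nat) (Qa Qr : {set 'I_n}).

Definition nonhalting : pred 'I_n := fun i => (i \notin Qa) && (i \notin Qr).

Definition Pnon : 'M[C]_n := diag_mx (\row_i (nonhalting i)%:R).

Lemma PnonE p (z : 'M[C]_(n, p)) i j :
  (Pnon *m z) i j = if nonhalting i then z i j else 0.
Proof. by rewrite mul_diag_mx !mxE; case: ifP; rewrite ?mul1r ?mul0r. Qed.

Lemma Pnon_adj : Pnon ^t* = Pnon.
Proof.
apply/matrixP => i j; rewrite !mxE eq_sym.
by case: eqP => [->|_]; rewrite ?mulr1n ?mulr0n ?conjC0 ?conjC_nat.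
Qed.

Lemma Pnon_idem : Pnon *m Pnon = Pnon.
Proof.
by apply/matrixP => i j; rewrite PnonE !mxE; case: ifP => [->|_]; rewrite ?mul0rn.
Qed.

Lemma Pnon_delta i : nonhalting i -> Pnon *m delta_mx i 0 = delta_mx i 0 :> 'cV[C]_n.
Proof.
move=> hi; apply/matrixP => k j; rewrite PnonE mxE.
by case: eqP => [->|_]; rewrite ?hi //; case: ifP.
Qed.

Lemma mm_stepE (U : 'M[C]_n) (st : state n) :
  mm_step Qa Qr U st =
  (Pnon *m (U *m st.1.1),
   st.1.2 + \sum_(i in Qa) `|(U *m st.1.1) i 0| ^+ 2,
   st.2 + \sum_(i in Qr) `|(U *m st.1.1) i 0| ^+ 2).
Proof. by congr (_, _, _); apply/matrixP => i j; rewrite ord1 PnonE mxE. Qed.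

Lemma mm_step0 (U : 'M[C]_n) : mm_step Qa Qr U (0, 0, 0) = (0, 0, 0).
Proof.
rewrite mm_stepE /= !mulmx0 !add0r.
by congr (_, _, _); apply: big1 => i _; rewrite mxE normr0 expr0n.
Qed.

Lemma Pnon_mm_step (U : 'M[C]_n) (st : state n) :
  Pnon *m (mm_step Qa Qr U st).1.1 = (mm_step Qa Qr U st).1.1.
Proof. by rewrite mm_stepE /= [LHS]mulmxA Pnon_idem. Qed.

Definition mass (st : state n) : C := sqnorm st.1.1 + st.1.2 + st.2.

Lemma sqnorm_Pnon (z : 'cV[C]_n) : [disjoint Qa & Qr] ->
  sqnorm z = sqnorm (Pnon *m z)
             + \sum_(i in Qa) `|z i 0| ^+ 2 + \sum_(i in Qr) `|z i 0| ^+ 2.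
Proof.
move=> QaQr; rewrite /sqnorm [X in _ + X + _]big_mkcond [X in _ + X]big_mkcond.
rewrite -!big_split; apply: eq_bigr => i _; rewrite PnonE /nonhalting /=.
case: (boolP (i \in Qa)) => [iQa|_].
  by rewrite (disjointFr QaQr iQa) normr0 expr0n /= !addr0 add0r.
by case: (i \in Qr); rewrite /= ?normr0 ?expr0n /= ?add0r ?addr0.
Qed.

Lemma mm_step_mass (U : 'M[C]_n) (st : state n) :
  [disjoint Qa & Qr] -> U \is unitarymx -> mass (mm_step Qa Qr U st) = mass st.
Proof.
move=> QaQr Uu; rewrite mm_stepE /mass /= -(sqnorm_unitary st.1.1 Uu).
by rewrite (sqnorm_Pnon (U *m st.1.1) QaQr); ring.
Qed.

Lemma householder_Pnon (u : 'cV[C]_n) :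
  Pnon *m u = u -> householder u *m Pnon = Pnon *m householder u.
Proof. exact/householder_comm/Pnon_adj. Qed.

Lemma householder_fix_halting (u z : 'cV[C]_n) i :
  Pnon *m u = u -> ~~ nonhalting i -> (householder u *m z) i 0 = z i 0.
Proof.
move=> Pu hi; apply: householder_fix.
by rewrite -Pu PnonE (negbTE hi).
Qed.

Section Conjugation.
Variable W : 'M[C]_n.
Hypotheses (WK : W *m W = 1%:M) (W_Pnon : W *m Pnon = Pnon *m W).
Hypothesis W_fix_halting :
  forall (z : 'cV[C]_n) i, ~~ nonhalting i -> (W *m z) i 0 = z i 0.

Definition map_state (st : state n) : state n := (W *m st.1.1, st.1.2, st.2).

Lemma mm_step_conj (U : 'M[C]_n) (st : state n) :
  mm_step Qa Qr (W *m U *m W) (map_state st) = map_state (mm_step Qa Qr U st).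
Proof.
have WUW : W *m U *m W *m (W *m st.1.1) = W *m (U *m st.1.1).
  by rewrite -mulmxA (mulmxA W) WK mul1mx mulmxA.
have fixQ (Q : {set 'I_n}) : {subset Q <= [predU Qa & Qr]} ->
    \sum_(i in Q) `|(W *m (U *m st.1.1)) i 0| ^+ 2 =
    \sum_(i in Q) `|(U *m st.1.1) i 0| ^+ 2.
  move=> sQ; apply: eq_bigr => i /sQ iQ; rewrite W_fix_halting //.
  by rewrite /nonhalting negb_and !negbK; case/orP: iQ => ->; rewrite ?orbT.
rewrite !mm_stepE /map_state /= WUW mulmxA -W_Pnon -mulmxA !fixQ // => i iQ.
- by rewrite inE iQ orbT.
- by rewrite inE iQ.
Qed.

Lemma foldl_mm_step_conj T (U : T -> 'M[C]_n) (st : state n) l :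
  foldl (fun st a => mm_step Qa Qr (W *m U a *m W) st) (map_state st) l =
  map_state (foldl (fun st a => mm_step Qa Qr (U a) st) st l).
Proof. by elim: l st => [|a l IHl] st //=; rewrite mm_step_conj IHl. Qed.

End Conjugation.
End Measurement.

Section DirectSum.
Variables (n1 n2 : nat).

Lemma split_lshift (i : 'I_n1) : split (lshift n2 i) = inl i.
Proof. exact: (unsplitK (inl _ i)). Qed.

Lemma split_rshift (i : 'I_n2) : split (rshift n1 i) = inr i.
Proof. exact: (unsplitK (inr _ i)). Qed.

Definition sum_set (A1 : {set 'I_n1}) (A2 : {set 'I_n2}) : {set 'I_(n1 + n2)} :=
  [set i | match split i with inl i1 => i1 \in A1 | inr i2 => i2 \in A2 end].

Lemma big_sum_set_col (A1 : {set 'I_n1}) (A2 : {set 'I_n2}) (F : C -> C)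
    (y1 : 'cV[C]_n1) (y2 : 'cV[C]_n2) :
  \sum_(i in sum_set A1 A2) F (col_mx y1 y2 i 0) =
  \sum_(i in A1) F (y1 i 0) + \sum_(i in A2) F (y2 i 0).
Proof.
rewrite big_mkcond big_split_ord; congr (_ + _); rewrite [RHS]big_mkcond;
  by apply: eq_bigr => i _; rewrite inE ?split_lshift ?split_rshift ?col_mxEu ?col_mxEd.
Qed.

Lemma disjoint_sum_set (A1 B1 : {set 'I_n1}) (A2 B2 : {set 'I_n2}) :
  [disjoint A1 & B1] -> [disjoint A2 & B2] -> [disjoint sum_set A1 A2 & sum_set B1 B2].
Proof.
move=> AB1 AB2; apply/pred0P => i /=; rewrite !inE.
by case: split => j; [case: (boolP (j \in A1)) => // /(disjointFr AB1) |
                      case: (boolP (j \in A2)) => // /(disjointFr AB2)].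
Qed.

Lemma Pnon_sum_set (A1 B1 : {set 'I_n1}) (A2 B2 : {set 'I_n2}) :
  Pnon (sum_set A1 A2) (sum_set B1 B2) = block_mx (Pnon A1 B1) 0 0 (Pnon A2 B2).
Proof.
rewrite /Pnon -diag_mx_row; congr diag_mx; apply/rowP => i.
rewrite mxE -(splitK i); case: (split i) => j /=;
  by rewrite ?row_mxEl ?row_mxEr mxE /nonhalting !inE ?split_lshift ?split_rshift.
Qed.

Definition sum_state (s1 : state n1) (s2 : state n2) : state (n1 + n2) :=
  (col_mx s1.1.1 s2.1.1, s1.1.2 + s2.1.2, s1.2 + s2.2).

Lemma mm_step_block (A1 B1 : {set 'I_n1}) (A2 B2 : {set 'I_n2})
    (U1 : 'M[C]_n1) (U2 : 'M[C]_n2) s1 s2 :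
  mm_step (sum_set A1 A2) (sum_set B1 B2) (block_mx U1 0 0 U2) (sum_state s1 s2) =
  sum_state (mm_step A1 B1 U1 s1) (mm_step A2 B2 U2 s2).
Proof.
rewrite !mm_stepE /sum_state /= mul_block_col !mul0mx addr0 add0r.
rewrite Pnon_sum_set mul_block_col !mul0mx addr0 add0r.
by rewrite !(big_sum_set_col _ _ (fun x => `|x| ^+ 2)); congr (_, _, _); ring.
Qed.

Lemma foldl_mm_step_block T (A1 B1 : {set 'I_n1}) (A2 B2 : {set 'I_n2})
    (U1 : T -> 'M[C]_n1) (U2 : T -> 'M[C]_n2) s1 s2 l :
  foldl (fun st a => mm_step (sum_set A1 A2) (sum_set B1 B2)
                             (block_mx (U1 a) 0 0 (U2 a)) st) (sum_state s1 s2) l =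
  sum_state (foldl (fun st a => mm_step A1 B1 (U1 a) st) s1 l)
            (foldl (fun st a => mm_step A2 B2 (U2 a) st) s2 l).
Proof. by elim: l s1 s2 => [|a l IHl] s1 s2 //=; rewrite mm_step_block IHl. Qed.

End DirectSum.

Lemma foldl_mm_step0 n T (Qa Qr : {set 'I_n}) (U : T -> 'M[C]_n) l :
  foldl (fun st a => mm_step Qa Qr (U a) st) (0, 0, 0) l = (0, 0, 0).
Proof. by elim: l => [|a l IHl] //=; rewrite mm_step0. Qed.

Section Ancilla.

Definition anc_start : 'I_5 := @Ordinal 5 0 isT.
Definition anc_wacc : 'I_5 := @Ordinal 5 1 isT.
Definition anc_wrej : 'I_5 := @Ordinal 5 2 isT.
Definition anc_acc : 'I_5 := @Ordinal 5 3 isT.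
Definition anc_rej : 'I_5 := @Ordinal 5 4 isT.

Definition anc_perm : 'S_5 := tperm anc_wacc anc_acc * tperm anc_wrej anc_rej.
Definition anc_U : 'M[C]_5 := perm_mx anc_perm.

(* The amplitudes live in non-halting states because W must fix the halting ones;
   anc_U moves them to anc_acc and anc_rej. *)
Definition anc_vec (a r : C) : 'cV[C]_5 :=
  \col_k (if k == anc_wacc then sqrtc a else if k == anc_wrej then sqrtc r else 0).

Lemma anc_U_unitary : anc_U \is unitarymx.
Proof.
apply/unitarymxP; rewrite /anc_U tr_perm_mx map_perm_mx.
by rewrite -perm_mxM mulgV perm_mx1.
Qed.

Lemma sqr_norm_sqrtc (a : C) : 0 <= a -> `|sqrtc a| ^+ 2 = a.
Proof. by move=> a0; rewrite ger0_norm ?sqrtc_ge0 // sqr_sqrtc. Qed.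

Lemma sqnorm_anc_vec (a r : C) :
  0 <= a -> 0 <= r -> sqnorm (anc_vec a r) = a + r.
Proof.
move=> a0 r0; rewrite /sqnorm (bigD1 anc_wacc) // (bigD1 anc_wrej) //= big1.
  by rewrite !mxE /= !sqr_norm_sqrtc // addr0.
by move=> k /andP[/negbTE k1 /negbTE k2]; rewrite mxE k1 k2 normr0 expr0n.
Qed.

Lemma Pnon_anc_vec (a r : C) :
  Pnon [set anc_acc] [set anc_rej] *m anc_vec a r = anc_vec a r.
Proof.
apply/matrixP => k j; rewrite ord1 PnonE /nonhalting !inE !mxE.
by case: k => -[|[|[|[|[|?]]]]].
Qed.

Lemma mm_step_anc (a r : C) : 0 <= a -> 0 <= r ->
  mm_step [set anc_acc] [set anc_rej] anc_U (anc_vec a r, - a, - r) = (0, 0, 0).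
Proof.
move=> a0 r0.
have anc_UE k : (anc_U *m anc_vec a r) k 0 = anc_vec a r (anc_perm k) 0.
  by rewrite -row_permE mxE.
rewrite mm_stepE !big_set1 /= !anc_UE !permM !permE /= !mxE /=.
rewrite !sqr_norm_sqrtc // !addNr; congr (_, _, _).
apply/matrixP => k j; rewrite ord1 PnonE anc_UE permM !permE !mxE.
by rewrite /nonhalting !inE; case: k => -[|[|[|[|[|?]]]]].
Qed.

Lemma foldl_anc T (a r : C) (l : seq T) : 0 <= a -> 0 <= r -> ~~ nilp l ->
  foldl (fun st _ => mm_step [set anc_acc] [set anc_rej] anc_U st)
        (anc_vec a r, - a, - r) l = (0, 0, 0).
Proof.
by move=> a0 r0; case: l => //= c l _; rewrite mm_step_anc // foldl_mm_step0.
Qed.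

End Ancilla.

Section OneMarker.
Variables (Sigma : finType) (n : nat) (M : mmqfa2 R Sigma n).
Local Notation Qa := (acc2 M).
Local Notation Qr := (rej2 M).

Definition after_cent : state n := mm_step Qa Qr (Ucent M) (init_state R (q02 M)).
Local Notation psi1 := after_cent.1.1.
Local Notation pacc := after_cent.1.2.
Local Notation prej := after_cent.2.

Lemma after_cent_acc_ge0 : 0 <= pacc.
Proof. by rewrite /= add0r sumr_ge0 // => i _; rewrite exprn_ge0. Qed.

Lemma after_cent_rej_ge0 : 0 <= prej.
Proof. by rewrite /= add0r sumr_ge0 // => i _; rewrite exprn_ge0. Qed.

Lemma mass_after_cent : mass after_cent = 1.
Proof.
rewrite mm_step_mass ?(disj2 M) //; last exact/unitaryP/unitcent.
by rewrite /mass sqnorm_delta !addr0.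
Qed.

Definition acc' : {set 'I_(n + 5)} := sum_set Qa [set anc_acc].
Definition rej' : {set 'I_(n + 5)} := sum_set Qr [set anc_rej].

Lemma disjoint_acc'_rej' : [disjoint acc' & rej'].
Proof.
apply: disjoint_sum_set (disj2 M) _.
by rewrite disjoints1 inE.
Qed.

Definition start : 'I_(n + 5) := rshift n anc_start.
Definition e_start : 'cV[C]_(n + 5) := delta_mx start 0.
Definition psi : 'cV[C]_(n + 5) := col_mx psi1 (anc_vec pacc prej).

Lemma e_start_unit : e_start ^t* *m e_start = 1%:M.
Proof. by rewrite sqnormE sqnorm_delta. Qed.

Lemma psi_unit : psi ^t* *m psi = 1%:M.
Proof.
rewrite sqnormE sqnorm_col_mx.
rewrite sqnorm_anc_vec ?after_cent_acc_ge0 ?after_cent_rej_ge0 //.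
by move: mass_after_cent; rewrite addrA /mass => ->.
Qed.

Lemma e_start_ortho_psi : e_start ^t* *m psi = 0.
Proof.
rewrite /e_start trmx_delta map_delta_mx -rowE.
by apply/rowP => j; rewrite mxE col_mxEd !mxE.
Qed.

Lemma Pnon_psi : Pnon acc' rej' *m psi = psi.
Proof.
by rewrite Pnon_sum_set mul_block_col !mul0mx addr0 add0r Pnon_anc_vec Pnon_mm_step.
Qed.

Lemma Pnon_e_start_psi : Pnon acc' rej' *m (e_start - psi) = e_start - psi.
Proof.
rewrite mulmxBr Pnon_psi Pnon_delta //.
by rewrite /nonhalting /acc' /rej' !inE split_rshift !inE.
Qed.

Definition W : 'M[C]_(n + 5) := householder (e_start - psi).

Lemma sqnorm_e_start_sub_psi : (e_start - psi) ^t* *m (e_start - psi) = 2%:M.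
Proof. exact: orthonormal_sub_sqnorm e_start_unit psi_unit e_start_ortho_psi. Qed.

Lemma WK : W *m W = 1%:M.
Proof. exact/householderK/sqnorm_e_start_sub_psi. Qed.

Lemma W_psi : W *m psi = e_start.
Proof.
by rewrite -(householder_swap e_start_unit e_start_ortho_psi) mulmxA WK mul1mx.
Qed.

Definition U' (s : option Sigma) : 'M[C]_(n + 5) :=
  W *m block_mx (U2 M s) 0 0 anc_U *m W.

Lemma U'_unitary s : unitary (U' s).
Proof.
have W_unitary : W \is unitarymx.
  exact/householder_unitary/sqnorm_e_start_sub_psi.
apply/unitaryP/(mul_unitarymx _ W_unitary)/(mul_unitarymx W_unitary).
exact/block_unitarymx/anc_U_unitary/unitaryP/unit2.
Qed.

Definition M' : mmqfa1 R Sigma (n + 5) := MMQFA1 start disjoint_acc'_rej' U'_unitary.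

Lemma foldl_U' l :
  foldl (fun st s => mm_step acc' rej' (U' s) st) (init_state R start) l =
  map_state W (sum_state
    (foldl (fun st s => mm_step Qa Qr (U2 M s) st) after_cent l)
    (foldl (fun st s => mm_step [set anc_acc] [set anc_rej] anc_U st)
           (anc_vec pacc prej, - pacc, - prej) l)).
Proof.
(* The ancilla starts with the probabilities -pacc and -prej, so that the totals
   of the block run are those of M from after_cent. *)
have -> : init_state R start =
          map_state W (sum_state after_cent (anc_vec pacc prej, - pacc, - prej)).
  by rewrite /map_state /sum_state /= W_psi !subrr.
rewrite foldl_mm_step_conj ?foldl_mm_step_block //.
- exact: WK.
- exact: householder_Pnon Pnon_e_start_psi.
- by move=> z i; apply: householder_fix_halting Pnon_e_start_psi.
Qed.

End OneMarker.
End MMStep.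

Theorem theoremA2 (R : realType) (Sigma : finType) (n : nat)
    (M : mmqfa2 R Sigma n) :
  exists (m : nat) (M' : mmqfa1 R Sigma m),
    forall x : seq Sigma, accprob1 M' x = accprob2 M x.
Proof.
exists (n + 5)%N, (M' M) => x.
rewrite /accprob1 /accprob2 foldl_U'.
rewrite foldl_anc ?after_cent_acc_ge0 ?after_cent_rej_ge0 //; last by case: (map Some x).
by rewrite /= addr0.
Qed.
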